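(* Let $F=\{1,2,3,5,8,\dots\}$ be the set of positive Fibonacci numbers. There exists a $4$-coloring of $\mathbb{N}$ admitting no monochromatic $4$-term $F$-diffsequence. In particular $F$ is not $4$-accessible, i.e. $\operatorname{doa}(F)\le 3$.
   Context: For $D\subseteq\mathbb{N}$, a $k$-term $D$-diffsequence is a sequence of integers $x_1,\dots,x_k$ with $x_{i+1}-x_i\in D$ for all $1\le i\le k-1$. $D$ is $r$-accessible if every $r$-coloring $\chi:\mathbb{N}\to\{1,\dots,r\}$ admits monochromatic $k$-term $D$-diffsequences for every $k\ge1$; $\operatorname{doa}(D)$ is the greatest $r$ for which $D$ is $r$-accessible. *)

From mathcomp Require Import all_boot.
Set Implicit Arguments. Unset Strict Implicit. Unset Printing Implicit Defensive.

Fixpoint fib (n : nat) : nat :=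
  match n with
  | 0 => 0
  | 1 => 1
  | (m.+1 as p).+1 => fib p + fib m
  end.

Definition Fib (d : nat) : Prop := 0 < d /\ exists n, d = fib n.

(* N = positive integers {1,2,...}. A k-term D-diffsequence in N is given
   by x 0, ..., x (k-1) (indices 0-based), all in N, with consecutive
   differences in D. *)
Definition diffseq (D : nat -> Prop) (x : nat -> nat) (k : nat) : Prop :=
  (forall i, i < k -> 0 < x i) /\
  (forall i, i.+1 < k -> exists2 d, D d & x i.+1 = x i + d).

Definition monochromatic (r : nat) (chi : nat -> 'I_r) (x : nat -> nat) (k : nat)
  : Prop := forall i, i < k -> chi (x i) = chi (x 0).

(* D is r-accessible: every r-colouring of N admits monochromatic k-term
   D-diffsequences for every k >= 1. (Colourings are functions nat -> 'I_r;
   only their values on positive integers matter.) *)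
Definition accessible (D : nat -> Prop) (r : nat) : Prop :=
  forall chi : nat -> 'I_r, forall k, 1 <= k ->
    exists x, diffseq D x k /\ monochromatic chi x k.

(** Colour [x] by its parity and by whether the fractional part [theta x] of
    [x * rot], [rot = (sqrt 5 - 1) / 8], lies in [[0, arc)] or in [[arc, 1)],
    where [arc = 2 * rot].  Consecutive terms of a monochromatic sequence have
    the same parity, so they differ by an even Fibonacci number [fib (3m+3)].
    As [fib (3m+2) = 1 mod 4] and [fib (3m+3) * - psi = fib (3m+2) - psi^(3m+3)]
    for the conjugate golden ratio [psi], adding [fib (3m+3)] rotates [theta]
    modulo 1 by an amount in [[sqrt 5 - 2, arc]].  Within either arc such a
    rotation cannot wrap around, and then three points never fit in
    [[0, arc)] and four never fit in [[arc, 1)]. *)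

From Stdlib Require Import Reals Lra Lia.
From mathcomp Require Import all_boot zify.

Set Implicit Arguments.
Unset Strict Implicit.

Lemma fibSS n : fib n.+2 = fib n.+1 + fib n.
Proof. by []. Qed.

Lemma fib_addn3 n : fib (n + 3) = 2 * fib n.+1 + fib n.
Proof. rewrite !addnS addn0 !fibSS; lia. Qed.

Lemma fib_addn6 n : fib (n + 6) = fib n + 4 * (2 * fib n.+1 + fib n).
Proof. rewrite !addnS addn0 !fibSS; lia. Qed.

Lemma odd_fib n : odd (fib n) = ~~ (3 %| n).
Proof.
elim/ltn_ind: n => -[|[|[|n]]] // IH.
have -> : n.+3 = n + 3 by rewrite addn3.
by rewrite fib_addn3 oddD oddM /= IH ?addn3 //; lia.
Qed.

Lemma fib_3m2_mod4 m : fib (3 * m + 2) = 1 %[mod 4].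
Proof.
elim/ltn_ind: m => -[|[|m]] // IH.
have -> : 3 * m.+2 + 2 = (3 * m + 2) + 6 by lia.
by rewrite fib_addn6 addnC mulnC modnMDl IH.
Qed.

Lemma even_fib_pos d : Fib d -> ~~ odd d -> exists m, d = fib (3 * m + 3).
Proof.
case=> d_gt0 [n Ed]; subst d; rewrite odd_fib negbK => /dvdnP [k En].
case: k En => [|m] En; first by rewrite En in d_gt0.
by exists m; rewrite En; congr fib; lia.
Qed.

Local Open Scope R_scope.

Definition psi : R := (1 - sqrt 5) / 2.
Definition rot : R := (sqrt 5 - 1) / 8.
Definition arc : R := (sqrt 5 - 1) / 4.
Definition theta (x : nat) : R := frac_part (INR x * rot).

Lemma theta_bounds x : 0 <= theta x < 1.
Proof. by have [? ?] := base_fp (INR x * rot); rewrite /theta; lra. Qed.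

Lemma sqrt5_sq : sqrt 5 * sqrt 5 = 5.
Proof. by rewrite sqrt_sqrt; lra. Qed.

Lemma sqrt5_bounds : 2.236 < sqrt 5 < 2.2361.
Proof. have := sqrt5_sq; have := sqrt_pos 5; split; nra. Qed.

Lemma psi_sq : psi * psi = psi + 1.
Proof. have := sqrt5_sq; rewrite /psi; nra. Qed.

Lemma psi_cube : psi ^ 3 = 2 - sqrt 5.
Proof.
have -> : psi ^ 3 = (psi * psi) * psi by simpl; ring.
by rewrite psi_sq Rmult_plus_distr_r psi_sq /psi; lra.
Qed.

(* [psi] is the conjugate root of [X^2 - X - 1]; the identity is Binet's
   formula rearranged so that only [psi] occurs. *)
Lemma fib_psi n : INR (fib n.+1) * - psi + psi ^ n.+1 = INR (fib n).
Proof.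
suff : INR (fib n.+1) * - psi + psi ^ n.+1 = INR (fib n) /\
       INR (fib n.+2) * - psi + psi ^ n.+2 = INR (fib n.+1) by case.
elim: n => [|n [IH1 IH2]]; first by have := psi_sq; simpl; lra.
split=> //.
have psiSS : psi ^ n.+3 = psi ^ n.+2 + psi ^ n.+1.
  by rewrite [psi ^ n.+3]/= -Rmult_assoc psi_sq /=; ring.
rewrite fibSS [fib n.+2]fibSS !plus_INR psiSS.
by rewrite fibSS plus_INR in IH2; lra.
Qed.

Lemma pow_bounds_neg (c : R) m : -1 < c < 0 -> c <= c ^ m.+1 <= c ^ 2.
Proof.
move=> c_bds; elim: m => [|m IH]; first by simpl; nra.
have -> : c ^ m.+2 = c * c ^ m.+1 by [].
by simpl in *; nra.
Qed.

Lemma fib_rot_decomp m : exists (q : nat) (s : R),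
  INR (fib (3 * m + 3)) * rot = INR q + s /\ sqrt 5 - 2 <= s <= arc.
Proof.
have [q Eq] : exists q, fib (3 * m + 2) = (4 * q + 1)%nat.
  exists (fib (3 * m + 2) %/ 4)%N.
  by have := divn_eq (fib (3 * m + 2)) 4; rewrite fib_3m2_mod4; lia.
exists q, ((1 - psi ^ (3 * m + 3)) / 4); split.
  have := fib_psi (3 * m + 2).
  have -> : (3 * m + 2).+1 = (3 * m + 3)%N by lia.
  have -> : rot = - psi / 4 by rewrite /rot /psi; lra.
  by rewrite Eq plus_INR mult_INR /=; lra.
have -> : (3 * m + 3)%nat = (3 * m.+1)%nat by lia.
rewrite pow_mult psi_cube.
have := sqrt5_bounds; have := sqrt5_sq => ? ?.
have := @pow_bounds_neg (2 - sqrt 5) m ltac:(lra).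
have -> : (2 - sqrt 5) ^ 2 = 9 - 4 * sqrt 5 by simpl; nra.
rewrite /arc; lra.
Qed.

Definition rot_step (s t t' : R) : Prop := t' = t + s \/ t' = t + s - 1.

Lemma frac_part_shift (y s : R) (q : nat) : 0 <= s < 1 ->
  rot_step s (frac_part y) (frac_part (y + (INR q + s))).
Proof.
move=> s_bds.
have [_ frac_qs] : Z.of_nat q = Int_part (INR q + s) /\ s = frac_part (INR q + s).
  by apply: Int_part_frac_part_spec; rewrite // -INR_IZR_INZ.
have [y0 y1] := base_fp y.
case: (Rlt_le_dec (frac_part y + s) 1) => Hs.
- by left; rewrite plus_frac_part2 -frac_qs.
- by right; rewrite plus_frac_part1 -frac_qs //; lra.
Qed.

Lemma theta_even_fib_step a d : Fib d -> ~~ odd d ->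
  exists2 s, sqrt 5 - 2 <= s <= arc & rot_step s (theta a) (theta (a + d)).
Proof.
move=> Fd d_even; have [m ->] := even_fib_pos Fd d_even.
have [q [s [Es s_bds]]] := fib_rot_decomp m.
exists s => //; rewrite /theta plus_INR Rmult_plus_distr_r Es.
by apply: frac_part_shift; have := sqrt5_bounds; rewrite /arc in s_bds; lra.
Qed.

Lemma rot_step_same_arc (a s t t' : R) : a <= 1 / 2 -> 0 <= s <= a ->
  rot_step s t t' ->
  (0 <= t < a /\ 0 <= t' < a) \/ (a <= t < 1 /\ a <= t' < 1) -> t' = t + s.
Proof. by move=> ? ? [-> //|->] [] [? ?]; lra. Qed.

Lemma arc_le_half : arc <= 1 / 2.
Proof. by have := sqrt5_bounds; rewrite /arc; lra. Qed.

Lemma arc_lt_two_steps : arc < 2 * (sqrt 5 - 2).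
Proof. by have := sqrt5_bounds; rewrite /arc; lra. Qed.

Lemma arc_add_three_steps_gt1 : 1 < arc + 3 * (sqrt 5 - 2).
Proof. by have := sqrt5_bounds; rewrite /arc; lra. Qed.

Section Arcs.

Variable t : nat -> R.
Hypothesis t_steps : forall i, (i < 3)%N ->
  exists2 s, sqrt 5 - 2 <= s <= arc & rot_step s (t i) (t i.+1).

Lemma advance_within_arc i : (i < 3)%N ->
  (0 <= t i < arc /\ 0 <= t i.+1 < arc) \/ (arc <= t i < 1 /\ arc <= t i.+1 < 1) ->
  sqrt 5 - 2 <= t i.+1 - t i.
Proof.
move=> lt_i3 same_arc; have [s s_bds step] := t_steps lt_i3.
have := sqrt5_bounds => ?.
have no_wrap : t i.+1 = t i + s.
  by apply: (rot_step_same_arc arc_le_half _ step same_arc); lra.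
by lra.
Qed.

Lemma no_three_in_low_arc : ~ (forall i, (i < 3)%N -> 0 <= t i < arc).
Proof.
move=> low.
have := advance_within_arc (i := 0) erefl (or_introl (conj (low 0%N erefl) (low 1%N erefl))).
have := advance_within_arc (i := 1) erefl (or_introl (conj (low 1%N erefl) (low 2%N erefl))).
by have := low 0%N erefl; have := low 2%N erefl; have := arc_lt_two_steps; lra.
Qed.

Lemma no_four_in_high_arc : ~ (forall i, (i < 4)%N -> arc <= t i < 1).
Proof.
move=> high.
have := advance_within_arc (i := 0) erefl (or_intror (conj (high 0%N erefl) (high 1%N erefl))).
have := advance_within_arc (i := 1) erefl (or_intror (conj (high 1%N erefl) (high 2%N erefl))).
have := advance_within_arc (i := 2) erefl (or_intror (conj (high 2%N erefl) (high 3%N erefl))).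
by have := high 0%N erefl; have := high 3%N erefl; have := arc_add_three_steps_gt1; lra.
Qed.

End Arcs.

Definition in_low_arc (x : nat) : bool := if Rlt_dec (theta x) arc then true else false.

Lemma in_low_arcP x : reflect (theta x < arc) (in_low_arc x).
Proof. by rewrite /in_low_arc; case: Rlt_dec => H; constructor. Qed.

Definition colour (x : nat) : 'I_4 := inord (2 * in_low_arc x + odd x).

Lemma colour_components_eq a b : colour a = colour b ->
  in_low_arc a = in_low_arc b /\ odd a = odd b.
Proof.
move/(congr1 val); rewrite /= !inordK; last 2 first.
- by case: (in_low_arc b); case: (odd b).
- by case: (in_low_arc a); case: (odd a).
by case: (in_low_arc a); case: (in_low_arc b); case: (odd a); case: (odd b).
Qed.

Lemma colour_no_mono_4_diffseq x : ~ (diffseq Fib x 4 /\ monochromatic colour x 4).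
Proof.
case=> [[_ x_steps] x_mono].
have same i : (i < 4)%N ->
    in_low_arc (x i) = in_low_arc (x 0%N) /\ odd (x i) = odd (x 0%N).
  by move=> ?; apply: colour_components_eq; apply: x_mono.
have step i : (i < 3)%N ->
    exists2 s, sqrt 5 - 2 <= s <= arc & rot_step s (theta (x i)) (theta (x i.+1)).
  move=> Hi; have [d Fd Ed] := x_steps i Hi.
  have d_even : ~~ odd d.
    have := (same i.+1 Hi).2; rewrite -(same i (ltnW Hi)).2 Ed oddD.
    by case: (odd (x i)); case: (odd d).
  by rewrite Ed; apply: theta_even_fib_step.
case: (in_low_arcP (x 0%N)) => low0.
- apply: (@no_three_in_low_arc (fun i => theta (x i)) step) => i lt_i3.
  split; first exact: (theta_bounds _).1.
  by apply/in_low_arcP; rewrite (same i (ltnW lt_i3)).1; apply/in_low_arcP.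
- apply: (@no_four_in_high_arc (fun i => theta (x i)) step) => i lt_i4.
  split; last exact: (theta_bounds _).2.
  apply: Rnot_lt_le => /in_low_arcP; rewrite (same i lt_i4).1.
  by move/in_low_arcP.
Qed.

Local Close Scope R_scope.

Lemma accessible_le (D : nat -> Prop) r r' :
  r <= r' -> accessible D r' -> accessible D r.
Proof.
move=> le_rr' acc chi k k_gt0.
have [x [x_diff x_mono]] := acc (fun n => widen_ord le_rr' (chi n)) k k_gt0.
by exists x; split=> // i lt_ik; apply: val_inj; have /(congr1 val) := x_mono i lt_ik.
Qed.

Theorem mainTheorem9 :
  (exists chi : nat -> 'I_4,
     forall x : nat -> nat, ~ (diffseq Fib x 4 /\ monochromatic chi x 4))
  /\ ~ accessible Fib 4
  /\ (forall r, accessible Fib r -> r <= 3).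
Proof.
have not_acc4 : ~ accessible Fib 4.
  by move=> acc; have [x] := acc colour 4 erefl; apply: colour_no_mono_4_diffseq.
split; first by exists colour; exact: colour_no_mono_4_diffseq.
split=> // r acc; rewrite leqNgt; apply/negP => r_gt3.
exact/not_acc4/(accessible_le r_gt3).
Qed.
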